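(* Let $a,b$ be coprime positive integers, $q=a/b$, and let $\mathbf m=(m_0,\dots,m_k)$ and $\mathbf n=(n_0,\dots,n_l)$ be paths for $q$ with $c(q,\mathbf m)=c(q,\mathbf n)$. Write $a\,c(q,\mathbf m_j)=u_j/v_j$ ($j=0,\dots,k-1$) and $a\,c(q,\mathbf n_j)=x_j/y_j$ ($j=0,\dots,l-1$) as reduced fractions, and let $N$ be a positive integer with $u_j\mid N$ for $j=0,\dots,k-1$ and $x_j\mid N$ for $j=0,\dots,l-1$. If $k\ne l$, then $w_{q'}$ is not unique for every $q'=a/b'$ with $b'$ a positive integer such that $b'\equiv\pm b\pmod N$ and $b'\ne\big(w_q(\mathbf m)/w_q(\mathbf n)\big)^{2/(k-l)}b$. If $k=l$ and $w_q(\mathbf m)\ne w_q(\mathbf n)$, then $w_{q'}$ is not unique for every $q'=a/b'$ with $b'$ a positive integer such that $b'\equiv\pm b\pmod N$.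
   Context: For $q>0$, $k\ge0$ and $\mathbf m=(m_0,\dots,m_k)\in\mathbb Z^{k+1}$ put $\mathbf m_j=(m_0,\dots,m_j)$; define $c(q,\mathbf m_0)=m_0$ and $c(q,\mathbf m_j)=m_j+\frac{1}{q\,c(q,\mathbf m_{j-1})}$ for $1\le j\le k$. $\mathbf m$ is a path for $q$ of length $k$ if $c(q,\mathbf m_j)\ne0$ for $0\le j\le k-1$. The weight is $w_q(\mathbf m)=q^{k/2}\prod_{j=0}^{k-1}|c(q,\mathbf m_j)|$ (and $1$ if $k=0$). The weight $w_q$ is unique if $w_q(\mathbf m)=w_q(\mathbf n)$ for all paths $\mathbf m,\mathbf n$ for $q$ with $c(q,\mathbf m)=c(q,\mathbf n)$. *)

From HB Require Import structures.
From mathcomp Require Import all_boot all_order all_algebra.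
From mathcomp Require Import all_classical all_reals all_analysis.
Set Implicit Arguments. Unset Strict Implicit. Unset Printing Implicit Defensive.
Import Order.TTheory GRing.Theory Num.Theory.
Local Open Scope ring_scope.

(* c(q, (m_0,...,m_j)): c(q,(m0)) = m0 and
   c(q, m_j) = m_j + 1/(q c(q, m_{j-1})). The empty sequence is not a path;
   its value is irrelevant (set to 0). *)
Definition cval (q : rat) (m : seq int) : rat :=
  match m with
  | [::] => 0
  | m0 :: ms => foldl (fun acc x => x%:~R + (q * acc)^-1) (m0%:~R) ms
  end.

Definition len (m : seq int) : nat := (size m).-1.

(* prefix m_j = (m_0,...,m_j) *)
Definition pref (m : seq int) (j : nat) : seq int := take j.+1 m.

Definition is_path (q : rat) (m : seq int) : Prop :=
  (0 < size m)%N /\ forall j : nat, (j < len m)%N -> cval q (pref m j) != 0.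

Definition weight (R : realType) (q : rat) (m : seq int) : R :=
  powR (ratr q) ((len m)%:R / 2) *
  \prod_(j < len m) `|ratr (cval q (pref m j)) : R|.

Definition w_unique (R : realType) (q : rat) : Prop :=
  forall m n : seq int, is_path q m -> is_path q n -> cval q m = cval q n ->
    weight R q m = weight R q n.

From HB Require Import structures.
From mathcomp Require Import all_boot all_order all_algebra.
From mathcomp Require Import all_classical all_reals all_analysis.
From mathcomp Require Import ring.
Set Implicit Arguments. Unset Strict Implicit. Unset Printing Implicit Defensive.
Import Order.TTheory GRing.Theory Num.Theory.
Local Open Scope ring_scope.

(* Write b' = s b + t N with s = 1 or -1. A path m for q = a/b is transported to a path m'
   for q' = a/b' by  m'_0 = e m_0  and  m'_(j+1) = e_(j+1) m_(j+1) - e_j t N / (a c_j),  where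
   e_j = e s^j and c_j = c(q, m_j); the correction is an integer because the numerator of a c_j
   divides N. Then c(q', m'_j) = e_j c_j, so for e = s^k the transported path ends at the same
   value c(q, m), while w_q'(m') = (b/b')^(k/2) w_q(m). Transporting both m and n, uniqueness of
   w_q' forces (b/b')^(k/2) w_q(m) = (b/b')^(l/2) w_q(n), which contradicts the hypothesis on b'. *)

Lemma pref_len m : (0 < size m)%N -> pref m (len m) = m.
Proof. by move=> m0; rewrite /pref /len prednK // take_size. Qed.

Lemma cval_prefS q m j : (j < len m)%N ->
  cval q (pref m j.+1) = (nth 0 m j.+1)%:~R + (q * cval q (pref m j))^-1.
Proof.
rewrite /pref /len ltn_predRL => lt_j; rewrite (take_nth 0) //.
by case: m lt_j => //= x m _; rewrite foldl_rcons.
Qed.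

Definition twist (e s : int) (r : nat -> int) (m : seq int) : seq int :=
  mkseq (fun j => if j is i.+1 then e * s ^+ j * nth 0 m j + e * s ^+ i * r i
                  else e * nth 0 m 0) (size m).

Lemma size_twist e s r m : size (twist e s r m) = size m.
Proof. exact: size_mkseq. Qed.

Lemma len_twist e s r m : len (twist e s r m) = len m.
Proof. by rewrite /len size_twist. Qed.

Section Twist.
Variables (q q' : rat) (e s : int) (r : nat -> int) (m : seq int).
Hypotheses (e2 : e ^+ 2 = 1) (s2 : s ^+ 2 = 1).
Hypothesis def_r : forall j, (j < len m)%N ->
  (r j)%:~R = (s%:~R / q - q'^-1) / cval q (pref m j).

Lemma sqr_twist_sign j : (e * s ^+ j) ^+ 2 = 1.
Proof. by rewrite exprMn -exprM mulnC exprM s2 expr1n mulr1 e2. Qed.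

Lemma cval_twist j : (j <= len m)%N ->
  cval q' (pref (twist e s r m) j) = (e * s ^+ j)%:~R * cval q (pref m j).
Proof.
elim: j => [|j IHj] lt_j.
  case: m def_r lt_j => [|x ms] _ _; first by rewrite /pref /twist /= mulr0.
  by rewrite /pref /twist /= !take0 /= mulr1 intrM.
rewrite !cval_prefS ?len_twist // IHj; last exact: ltnW.
rewrite nth_mkseq -?ltn_predRL //= exprSr !mulrA.
have := sqr_twist_sign j; set E := e * s ^+ j => E2; clearbody E.
have invE : (E%:~R : rat)^-1 = E%:~R.
  by apply: mulr1_eq; rewrite -intrM -expr2 E2.
rewrite intrD !intrM def_r // !invfM invE.
ring.
Qed.

Lemma is_path_twist : is_path q m -> is_path q' (twist e s r m).
Proof.
case=> m0 path_m; split=> [|j]; rewrite ?size_twist ?len_twist // => lt_j.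
have E0 : (e * s ^+ j)%:~R != 0 :> rat.
  by rewrite intr_eq0; apply/eqP => eq0; move: (sqr_twist_sign j); rewrite eq0.
by rewrite cval_twist 1?ltnW // mulf_neq0 // path_m.
Qed.

Lemma cval_twist_last : (0 < size m)%N ->
  cval q' (twist e s r m) = (e * s ^+ len m)%:~R * cval q m.
Proof.
move=> m0; have m'0 : (0 < size (twist e s r m))%N by rewrite size_twist.
by rewrite -(pref_len m'0) len_twist cval_twist // pref_len.
Qed.

Lemma weight_twist (R : realType) : 0 < q -> 0 < q' ->
  weight R q' (twist e s r m) = powR (ratr (q' / q)) ((len m)%:R / 2) * weight R q m.
Proof.
move=> q0 q'0; rewrite /weight len_twist mulrA -powRM ?ler0q ?ltW ?divr_gt0 //.
rewrite -rmorphM /= divfK ?gt_eqF //; congr (_ * _); apply: eq_bigr => j _.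
rewrite cval_twist 1?ltnW // rmorphM normrM rmorph_int -intr_norm.
suff -> : `|e * s ^+ j| = 1 by rewrite mul1r.
by apply/eqP; rewrite -sqr_norm_eq1 sqr_twist_sign.
Qed.

End Twist.

Lemma divz_numq_denq (N : int) (d : rat) : (numq d %| N)%Z ->
  ((N %/ numq d)%Z * denq d)%:~R = N%:~R / d.
Proof.
move=> dvd_N; have [->|d0] := eqVneq d 0; first by rewrite invr0 mulr0 [numq 0]/= divz0.
by rewrite -[in RHS](divzK dvd_N) !intrM numqE; field.
Qed.

Lemma eqz_mod_pm_affine (b b' N : int) :
  (b' == b %[mod N])%Z \/ (b' == - b %[mod N])%Z ->
  exists s t : int, s ^+ 2 = 1 /\ b' = s * b + t * N.
Proof.
case; rewrite eqz_mod_dvd => /dvdzP [t def_t].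
- by exists 1, t; rewrite expr1n mul1r -def_t addrC subrK.
- by exists (-1), t; rewrite sqrrN expr1n mulN1r -def_t opprK addrC addrK.
Qed.

Section Rescale.
Variables (a b b' N : nat) (s t : int).
Hypotheses (a_gt0 : (0 < a)%N) (b_gt0 : (0 < b)%N) (b'_gt0 : (0 < b')%N).
Hypotheses (s2 : s ^+ 2 = 1) (def_b' : b'%:Z = s * b%:Z + t * N%:Z).

(* The integer -t N / d for d = a c(q, m_j), whose numerator divides N. *)
Definition rescale_shift (m : seq int) (j : nat) : int :=
  let d := a%:Q * cval (a%:Q / b%:Q) (pref m j) in - t * ((N%:Z %/ numq d)%Z * denq d).

Definition rescale (m : seq int) : seq int :=
  twist (s ^+ len m) s (rescale_shift m) m.

Lemma rescale_shiftE m j :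
  (numq (a%:Q * cval (a%:Q / b%:Q) (pref m j)) %| N%:Z)%Z ->
  (rescale_shift m j)%:~R =
    (s%:~R / (a%:Q / b%:Q) - (a%:Q / b'%:Q)^-1) / cval (a%:Q / b%:Q) (pref m j).
Proof.
move=> dvd_N; rewrite /rescale_shift intrM divz_numq_denq // intrN.
rewrite invfM !invf_div def_b' intrD !intrM; set C := cval _ _.
have [->|C0] := eqVneq C 0; first by rewrite invr0 !mulr0.
have a0 : a%:R != 0 :> rat by rewrite pnatr_eq0 -lt0n.
by field; rewrite C0 a0.
Qed.

Lemma rescale_spec (R : realType) m :
  is_path (a%:Q / b%:Q) m ->
  (forall j, (j < len m)%N ->
     (numq (a%:Q * cval (a%:Q / b%:Q) (pref m j)) %| N%:Z)%Z) ->
  [/\ is_path (a%:Q / b'%:Q) (rescale m),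
      cval (a%:Q / b'%:Q) (rescale m) = cval (a%:Q / b%:Q) m &
      weight R (a%:Q / b'%:Q) (rescale m) =
        powR (b%:R / b'%:R) ((len m)%:R / 2) * weight R (a%:Q / b%:Q) m].
Proof.
move=> path_m dvd_N.
have e2 : (s ^+ len m) ^+ 2 = 1 by rewrite -exprM mulnC exprM s2 expr1n.
have def_r j (lt_j : (j < len m)%N) := rescale_shiftE (dvd_N j lt_j).
have q_gt0 (c : nat) : (0 < c)%N -> 0 < a%:Q / c%:Q.
  by move=> c_gt0; rewrite divr_gt0 ?ltr0n.
rewrite /rescale; split.
- exact: is_path_twist e2 s2 def_r path_m.
- by rewrite (cval_twist_last e2 s2 def_r) ?(proj1 path_m) // -expr2 e2 mul1r.
rewrite (weight_twist e2 s2 def_r) ?q_gt0 //; congr (powR _ _ * _).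
have a0 : a%:Q != 0 by rewrite pnatr_eq0 -lt0n.
by rewrite invf_div mulrC mulrA divfK // fmorph_div !rmorph_int !pmulrn.
Qed.

End Rescale.

Lemma weight_gt0 (R : realType) q m : 0 < q -> is_path q m -> 0 < weight R q m.
Proof.
move=> q0 [_ path_m]; rewrite mulr_gt0 ?powR_gt0 ?ltr0q //.
by rewrite prodr_gt0 // => j _; rewrite normr_gt0 fmorph_eq0 path_m.
Qed.

Lemma powR_ratio_balance (R : realType) (x u v k l : R) :
  0 < x -> 0 < v -> k != l ->
  powR x (k / 2) * u = powR x (l / 2) * v ->
  powR (u / v) (2 / (k - l)) = x^-1.
Proof.
move=> x0 v0 kl balance.
have xk0 : powR x (k / 2) != 0 by rewrite gt_eqF // powR_gt0.
have uv : u / v = powR x (l / 2 - k / 2).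
  rewrite powRB; last by apply/implyP => _; rewrite gt_eqF.
  have v0' : v != 0 by rewrite gt_eqF.
  by apply/eqP; rewrite eqr_div // mulrC balance.
have kl0 : k - l != 0 by rewrite subr_eq0.
rewrite uv -powRrM (_ : _ * _ = -1) ?powR_inv1 ?ltW //.
by field.
Qed.

Lemma weight_balance_of_unique (R : realType) (a b b' N : nat) (m n : seq int) :
  (0 < a)%N -> (0 < b)%N -> (0 < b')%N ->
  (b'%:Z == b%:Z %[mod N%:Z])%Z \/ (b'%:Z == - b%:Z %[mod N%:Z])%Z ->
  is_path (a%:Q / b%:Q) m -> is_path (a%:Q / b%:Q) n ->
  cval (a%:Q / b%:Q) m = cval (a%:Q / b%:Q) n ->
  (forall j : nat, (j < len m)%N ->
     (numq (a%:Q * cval (a%:Q / b%:Q) (pref m j)) %| N%:Z)%Z) ->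
  (forall j : nat, (j < len n)%N ->
     (numq (a%:Q * cval (a%:Q / b%:Q) (pref n j)) %| N%:Z)%Z) ->
  w_unique R (a%:Q / b'%:Q) ->
  powR (b%:R / b'%:R) ((len m)%:R / 2) * weight R (a%:Q / b%:Q) m =
  powR (b%:R / b'%:R) ((len n)%:R / 2) * weight R (a%:Q / b%:Q) n.
Proof.
move=> a0 b0 b'0 /eqz_mod_pm_affine [s [t [s2 def_b']]] path_m path_n cval_mn
  dvd_m dvd_n uniq'.
have [path_m' cval_m' <-] := rescale_spec a0 b0 b'0 s2 def_b' R path_m dvd_m.
have [path_n' cval_n' <-] := rescale_spec a0 b0 b'0 s2 def_b' R path_n dvd_n.
by apply: uniq' path_m' path_n' _; rewrite cval_m' cval_n'.
Qed.

Theorem corollary6 (R : realType) (a b N : nat) (m n : seq int) :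
  (0 < a)%N -> (0 < b)%N -> coprime a b -> (0 < N)%N ->
  is_path (a%:Q / b%:Q) m -> is_path (a%:Q / b%:Q) n ->
  cval (a%:Q / b%:Q) m = cval (a%:Q / b%:Q) n ->
  (forall j : nat, (j < len m)%N ->
     (numq (a%:Q * cval (a%:Q / b%:Q) (pref m j)) %| N%:Z)%Z) ->
  (forall j : nat, (j < len n)%N ->
     (numq (a%:Q * cval (a%:Q / b%:Q) (pref n j)) %| N%:Z)%Z) ->
  (len m <> len n ->
    forall b' : nat, (0 < b')%N ->
      ((b'%:Z == b%:Z %[mod N%:Z])%Z \/ (b'%:Z == - b%:Z %[mod N%:Z])%Z) ->
      (b'%:R : R) != powR (weight R (a%:Q / b%:Q) m / weight R (a%:Q / b%:Q) n)
                          (2 / ((len m)%:R - (len n)%:R)) * b%:R ->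
      ~ w_unique R (a%:Q / b'%:Q))
  /\
  (len m = len n -> weight R (a%:Q / b%:Q) m != weight R (a%:Q / b%:Q) n ->
    forall b' : nat, (0 < b')%N ->
      ((b'%:Z == b%:Z %[mod N%:Z])%Z \/ (b'%:Z == - b%:Z %[mod N%:Z])%Z) ->
      ~ w_unique R (a%:Q / b'%:Q)).
Proof.
move=> a0 b0 _ _ path_m path_n cval_mn dvd_m dvd_n.
have wn_gt0 : 0 < weight R (a%:Q / b%:Q) n.
  by apply: weight_gt0 path_n; rewrite divr_gt0 ?ltr0n.
have x_gt0 b' : (0 < b')%N -> 0 < (b%:R / b'%:R : R).
  by move=> b'0; rewrite divr_gt0 ?ltr0n.
have balance b' (b'0 : (0 < b')%N) mod_b' (uniq' : w_unique R (a%:Q / b'%:Q)) :=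
  weight_balance_of_unique a0 b0 b'0 mod_b' path_m path_n cval_mn dvd_m dvd_n uniq'.
split=> [neq_len | eq_len neq_w] b' b'0 mod_b'; [move=> /eqP neq_b' |] => uniq'.
- apply: neq_b'.
  rewrite (powR_ratio_balance (x_gt0 _ b'0) wn_gt0 _ (balance _ b'0 mod_b' uniq')).
    by rewrite invf_div divfK // pnatr_eq0 -lt0n.
  by rewrite eqr_nat; apply/eqP.
- have x0 : powR (b%:R / b'%:R) ((len n)%:R / 2) != 0 :> R.
    by rewrite gt_eqF // powR_gt0 // x_gt0.
  have := balance _ b'0 mod_b' uniq'; rewrite eq_len => /(mulfI x0) eq_w.
  by rewrite eq_w eqxx in neq_w.
Qed.
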